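(* Let $n>1$, $Q=\{1,2,\dots,n\}$, and for $k=1,2,\dots,n$ let $$B_{n,k}=\{t:Q\to Q \mid it>i \text{ for all } 1\le i<k,\ \text{and } it=k \text{ for all } i\ge k\}.$$ Let $B_n=\bigcup_{k=1}^n B_{n,k}$. Then $B_n$ is a semigroup under composition, every element of $B_n$ is non-permutational, $|B_n|=\lfloor e\cdot (n-1)!\rfloor$, and $B_n$ is maximal in the following sense: for every non-permutational transformation $t$ of $Q$ with $t\notin B_n$, the semigroup generated by $B_n\cup\{t\}$ contains a permutational transformation.
   Context: A transformation of $Q$ is a map $t:Q\to Q$; $it$ denotes the image of $i$, and composition is written left to right: $i(t_1t_2)=(it_1)t_2$. A transformation $t$ of $Q$ is permutational if there exists $X\subseteq Q$ with $|X|\ge 2$ such that $Xt\subseteq X$ and the restriction of $t$ to $X$ is a bijection of $X$ onto itself; otherwise $t$ is non-permutational. Here $e$ is Euler's number. *)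

From HB Require Import structures.
From mathcomp Require Import all_boot all_order all_algebra.
From mathcomp Require Import all_classical all_reals all_analysis.
Set Implicit Arguments. Unset Strict Implicit. Unset Printing Implicit Defensive.
Import Order.TTheory GRing.Theory Num.Theory.

(* Q = {1,...,n} is modelled as 'I_n = {0,...,n-1}
   (element i of 'I_n stands for i+1 of Q). *)

Definition transf (n : nat) := {ffun 'I_n -> 'I_n}.

(* left-to-right composition: i (t1 t2) = (i t1) t2 *)
Definition tmul n (t1 t2 : transf n) : transf n := [ffun i => t2 (t1 i)].

Definition permutational n (t : transf n) : Prop :=
  exists X : {set 'I_n},
    [/\ 1 < #|X|,
        (forall x, x \in X -> t x \in X),
        {in X &, injective t}
      & (forall y, y \in X -> exists2 x, x \in X & t x = y)].

(* B_{n,k} (0-indexed k): i t > i for i < k, and i t = k for i >= k *)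
Definition Bnk n (k : 'I_n) : {set transf n} :=
  [set t : transf n | [forall i : 'I_n, if (i < k)%N then (i < t i)%N else t i == k]].

Definition Bn n : {set transf n} := \bigcup_(k : 'I_n) Bnk k.

Inductive sgen n (S : {set transf n}) : transf n -> Prop :=
| sgen_base t : t \in S -> sgen S t
| sgen_mul t1 t2 : sgen S t1 -> sgen S t2 -> sgen S (tmul t1 t2).

(* Composing t in B_{n,l} after s in B_{n,k} lands in
   B_{n, t k}; and no such map is injective on a two-point invariant set, since the
   least point of a set covered by its image can only be the image of a point >= k,
   so it is k and the whole set is collapsed onto k.  Choosing the image of each
   i < k independently gives |B_{n,k}| = (n-1)(n-2)...(n-k), and
   sum_k (n-1)^_k = (n-1)! sum_{j <= n-1} 1/j!, which is floor(e (n-1)!) because the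
   tail sum_{j >= n} 1/j! lies strictly between 0 and 1/(n-1)!.
   For maximality, a non-permutational t has a unique fixed point r, reached by every
   orbit (a longer cycle would be a permutational restriction).  If t is not in
   B_{n,r}, the orbits force a descent t x < x together with a second point y with
   t y <> t x, and a map s in B_n sending t x to x and t y to y; then t s fixes x and
   y, hence is permutational. *)

From HB Require Import structures.
From mathcomp Require Import all_boot all_order all_algebra.
From mathcomp Require Import all_classical all_reals all_analysis.
From mathcomp Require Import zify.
From mathcomp.algebra_tactics Require Import lra.
Import Order.TTheory GRing.Theory Num.Theory.

Set Implicit Arguments. Unset Strict Implicit. Unset Printing Implicit Defensive.

Section Bnk.
Variable n : nat.
Implicit Types (s t : transf n) (i j k l : 'I_n).

Lemma BnkP k t :
  reflect (forall i, if (i < k)%N then (i < t i)%N else t i == k) (t \in Bnk k).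
Proof. by rewrite inE; apply: forallP. Qed.

Lemma Bnk_incr k t i : t \in Bnk k -> (i < k)%N -> (i < t i)%N.
Proof. by move=> /BnkP /(_ i); case: ltnP. Qed.

Lemma Bnk_const k t i : t \in Bnk k -> (k <= i)%N -> t i = k.
Proof. by move=> /BnkP /(_ i); case: ltnP => // _ /eqP. Qed.

Lemma Bnk_fix k t : t \in Bnk k -> t k = k.
Proof. by move/Bnk_const; apply. Qed.

Lemma Bnk_intro k t : (forall i, (i < k)%N -> (i < t i)%N) ->
  (forall i, (k <= i)%N -> t i = k) -> t \in Bnk k.
Proof.
move=> incr const; apply/BnkP => i; case: ltnP => [/incr //|/const ->].
exact: eqxx.
Qed.

Lemma Bnk_lt_image k t i j : t \in Bnk k -> (i <= j)%N -> (i < k)%N -> (i < t j)%N.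
Proof.
move=> tk ij ik; case: (ltnP j k) => [jk|kj]; last by rewrite (Bnk_const tk kj).
by have := Bnk_incr tk jk; lia.
Qed.

Lemma Bnk_inj k l t : t \in Bnk k -> t \in Bnk l -> k = l.
Proof.
move=> tk tl; case: (ltngtP k l) => [kl|lk|/val_inj //].
- by have := Bnk_incr tl kl; rewrite Bnk_fix // ltnn.
- by have := Bnk_incr tk lk; rewrite Bnk_fix // ltnn.
Qed.

Lemma BnP t : reflect (exists k, t \in Bnk k) (t \in Bn n).
Proof. by apply: (iffP bigcupP) => [[k _]|[k]]; exists k. Qed.

Lemma tmul_Bnk k l s t : s \in Bnk k -> t \in Bnk l -> tmul s t \in Bnk (t k).
Proof.
move=> sk tl; have tk_l : (l <= k)%N -> t k = l by exact: Bnk_const.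
apply: Bnk_intro => [i ltc|i lec]; rewrite ffunE.
- case: (ltnP i k) => [ik|ki]; last by rewrite (Bnk_const sk ki).
  have il : (i < l)%N by case: (leqP l k) => [/tk_l <-|]; lia.
  exact/(Bnk_lt_image tl _ il)/ltnW/(Bnk_incr sk).
- case: (ltnP i k) => [ik|ki]; last by rewrite (Bnk_const sk ki).
  have lk : (l <= k)%N by case: (leqP l k) => // /(Bnk_incr tl); lia.
  rewrite (tk_l lk) (Bnk_const tl) //.
  by have := Bnk_incr sk ik; rewrite tk_l // in lec; lia.
Qed.

Lemma tmul_Bn s t : s \in Bn n -> t \in Bn n -> tmul s t \in Bn n.
Proof.
by move=> /BnP [k sk] /BnP [l tl]; apply/BnP; exists (t k); exact: tmul_Bnk sk tl.
Qed.

Lemma Bn_not_permutational t : t \in Bn n -> ~ permutational t.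
Proof.
move=> /BnP [k tk] [X [/card_gt1P [x [y [xX yX xy]]] _ tinj tsurj]].
have [m mX m_min] := arg_minnP (@nat_of_ord n) xX.
have [z zX tzm] := tsurj m mX.
have k_le_X w : w \in X -> (k <= w)%N.
  move=> wX; apply: leq_trans (m_min w wX); rewrite -tzm.
  case: (ltnP z k) => [zk|kz]; last by rewrite (Bnk_const tk kz).
  by have := m_min z zX; rewrite -tzm; have := Bnk_incr tk zk; lia.
by move: xy; rewrite (tinj x y xX yX) ?eqxx // !(Bnk_const tk) ?k_le_X.
Qed.

Lemma card_ord_gt i : #|[pred j : 'I_n | (i < j)%N]| = n - i.+1.
Proof.
rewrite -sum1_card -[RHS]muln1 -sum_nat_const_nat big_geq_mkord.
by apply: eq_bigl => j.
Qed.

Lemma card_Bnk k : #|Bnk k| = n.-1 ^_ k.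
Proof.
pose F i := [pred j : 'I_n | if (i < k)%N then (i < j)%N else j == k].
have -> : #|Bnk k| = #|(family F : simpl_pred (transf n))|.
  by apply: eq_card => t; rewrite inE; apply/forallP/familyP.
rewrite card_family foldrE big_map big_enum /= ffact_prod.
rewrite (big_ord_widen n (fun m => n.-1 - m)) ?(ltnW (ltn_ord k)) //.
rewrite [LHS]big_mkcond [RHS]big_mkcond; apply: eq_bigr => i _ /=.
case: ifP => ik; first by rewrite card_ord_gt; lia.
by rewrite (@eq_card _ _ (pred1 k)) ?card1 // => j; rewrite !inE.
Qed.

Lemma card_Bn : #|Bn n| = \sum_(k < n) n.-1 ^_ k.
Proof.
transitivity (\sum_(t : transf n) #|[pred k | t \in Bnk k]|).
  rewrite -sum1_card big_mkcond; apply: eq_bigr => t _ /=.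
  case: (boolP (t \in Bn n)) => [/BnP [k tk]|tNB].
    rewrite (fintype.eq_card1 (x := k)) // => l.
    rewrite -[l \in _]/(t \in Bnk l) -[l \in _]/(l == k).
    by apply/idP/eqP => [tl|->] //; exact: Bnk_inj tl tk.
  rewrite eq_card0 // => k; rewrite -[k \in _]/(t \in Bnk k) -[k \in _]/false.
  by apply: contraNF tNB => tk; apply/BnP; exists k.
under eq_bigr do rewrite -sum1_card.
rewrite (exchange_big_dep xpredT) //=; apply: eq_bigr => k _.
by rewrite -card_Bnk -sum1_card.
Qed.
End Bnk.

Section EulerNumber.
Local Open Scope ring_scope.
Variable R : realType.

Local Notation e_sum := (series (exp_coeff (1 : R))).

Lemma e_sumS k : e_sum k.+1 = e_sum k + k`!%:R^-1.
Proof. by rewrite /series /= big_nat_recr //= /exp_coeff /= expr1n mul1r. Qed.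

Lemma e_sum_le_expR1 m : e_sum m <= expR 1.
Proof.
apply: nondecreasing_cvgn_le; last exact: is_cvg_series_exp_coeff.
by apply/nondecreasing_seqP => k; rewrite e_sumS lerDl invr_ge0.
Qed.

(* 1 + (3/2)/(j+1) <= 3/2 needs j >= 2, and 3/2 < 2 is what expR1_lt_e_sum needs
   at m = 1, so the constant 3/2 fits both. *)
Lemma e_sum_tail_nonincr j d : (2 <= j)%N ->
  e_sum (j + d)%N + 3/2 * (j + d)`!%:R^-1 <= e_sum j + 3/2 * j`!%:R^-1.
Proof.
move=> j_ge2; elim: d => [|d IH]; first by rewrite addn0.
apply: le_trans IH; rewrite addnS e_sumS -addrA lerD2l factS natrM invfM.
have a_ge0 : 0 <= (j + d)%N`!%:R^-1 :> R by rewrite invr_ge0.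
have b_le : (j + d)%N.+1%:R^-1 <= 3^-1 :> R.
  by rewrite lef_pV2 ?posrE ?ltr0n // ler_nat; lia.
move: a_ge0 b_le; set a := _^-1; set b := _^-1 => a_ge0 b_le.
have := ler_wpM2r a_ge0 b_le; lra.
Qed.

Lemma expR1_le_e_sum_tail j : (2 <= j)%N -> expR 1 <= e_sum j + 3/2 * j`!%:R^-1.
Proof.
move=> j_ge2; apply: limr_le; first exact: is_cvg_series_exp_coeff.
near=> N; have jN : (j <= N)%N by near: N; exists j.
rewrite -(subnKC jN); have := e_sum_tail_nonincr (N - j) j_ge2.
have : 0 <= 3/2 * (j + (N - j))%N`!%:R^-1 :> R by rewrite mulr_ge0 // invr_ge0.
lra.
Unshelve. all: by end_near.
Qed.

Lemma expR1_lt_e_sum m : (0 < m)%N -> expR 1 < e_sum m.+1 + m`!%:R^-1.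
Proof.
move=> m_gt0; apply: le_lt_trans (expR1_le_e_sum_tail (j := m.+1) m_gt0) _.
rewrite ltrD2l factS natrM invfM.
have a_gt0 : 0 < m`!%:R^-1 :> R by rewrite invr_gt0 ltr0n fact_gt0.
have b_le : m.+1%:R^-1 <= 2^-1 :> R.
  by rewrite lef_pV2 ?posrE ?ltr0n // ler_nat ltnS.
move: a_gt0 b_le; set a := _^-1; set b := _^-1 => a_gt0 b_le.
have := ler_wpM2r (ltW a_gt0) b_le; lra.
Qed.

Lemma fact_mul_e_sum m : m`!%:R * e_sum m.+1 = (\sum_(k < m.+1) m ^_ k)%:R.
Proof.
rewrite /series /= big_rev_mkord subn0 natr_sum mulr_sumr; apply: eq_bigr => i _.
have im : (i <= m)%N by rewrite -ltnS.
by rewrite /exp_coeff /= expr1n mul1r subSS -(ffact_fact im) natrM mulfK.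
Qed.

Lemma floor_expR1_fact m : (0 < m)%N ->
  Num.floor (expR (1 : R) * m`!%:R) = (\sum_(k < m.+1) m ^_ k)%:Z.
Proof.
move=> m_gt0; apply: floor_def.
rewrite intrD -!pmulrn -fact_mul_e_sum.
have lb := e_sum_le_expR1 m.+1; have ub := expR1_lt_e_sum m_gt0.
have f_gt0 : 0 < m`!%:R :> R by rewrite ltr0n fact_gt0.
have ff : m`!%:R * m`!%:R^-1 = 1 :> R by rewrite mulfV // gt_eqF.
apply/andP; split; nra.
Qed.
End EulerNumber.

Section Permutational.
Variable n : nat.
Implicit Types (t u : transf n) (x y z : 'I_n).

Lemma two_fixpoints_permutational u x y : x != y -> u x = x -> u y = y ->
  permutational u.
Proof.
move=> xy ux uy; exists [set x; y]; split.
- by rewrite cards2 xy.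
- by move=> w; rewrite !inE => /orP [] /eqP ->; rewrite ?ux ?uy eqxx ?orbT.
- by move=> v w; rewrite !inE => /orP [] /eqP -> /orP [] /eqP ->; rewrite ?ux ?uy.
- by move=> w wX; exists w => //; move: wX; rewrite !inE => /orP [] /eqP ->.
Qed.

Lemma cycle_permutational u z p : (0 < p)%N -> iter p u z = z -> u z != z ->
  permutational u.
Proof.
move=> p_gt0 uzp uzz.
pose X := [set iter k u z | k : 'I_p].
have XP x : reflect (exists2 k, (k < p)%N & x = iter k u z) (x \in X).
  apply: (iffP imsetP) => [[k _ ->]|[k kp ->]]; first by exists k.
  by exists (Ordinal kp).
have uX x : x \in X -> u x \in X.
  move=> /XP [k kp ->]; apply/XP; rewrite -iterS.
  have [kp'|pk] := ltnP k.+1 p; first by exists k.+1.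
  have -> : k.+1 = p by lia.
  by exists 0%N; rewrite ?uzp.
have X_uX : X \subset u @: X.
  apply/fintype.subsetP => x /XP [[|k] kp ->].
    apply/imsetP; exists (iter p.-1 u z); last by rewrite -iterS prednK // uzp.
    by apply/XP; exists p.-1 => //; lia.
  apply/imsetP; exists (iter k u z); last by rewrite -iterS.
  by apply/XP; exists k => //; lia.
have uXE : u @: X = X.
  apply/eqP; rewrite finset.eqEsubset X_uX andbT.
  by apply/fintype.subsetP => x /imsetP [w wX ->]; exact: uX.
exists X; split => //.
- have zX : z \in X by apply/XP; exists 0%N.
  by apply/card_gt1P; exists z, (u z); rewrite zX uX // eq_sym uzz.
- by apply/imset_injP; rewrite uXE.
- by move=> x; rewrite -{1}uXE => /imsetP [w wX ->]; exists w.
Qed.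

Lemma iter_cross t c m y : (c <= y)%N -> (iter m t y < c)%N ->
  exists2 z : 'I_n, (c <= z)%N & (t z < c)%N.
Proof.
elim: m y => [|m IH] y cy; first by rewrite /=; lia.
rewrite iterSr => tm_c.
by case: (ltnP (t y) c) => [tyc|cty]; [exists y | exact: IH cty tm_c].
Qed.

Definition generates_permutational t :=
  exists u, sgen (t |: Bn n) u /\ permutational u.

Lemma generates_permutational_retract t s x y : s \in Bn n -> x != y ->
  s (t x) = x -> s (t y) = y -> generates_permutational t.
Proof.
move=> sB xy stx sty; exists (tmul t s); split.
  by apply: sgen_mul; apply: sgen_base; rewrite !inE ?eqxx ?sB ?orbT.
by apply: (two_fixpoints_permutational xy); rewrite ffunE.
Qed.

Lemma generates_permutational_descent_ascent t x y :
  (t x < x)%N -> (t x < y)%N -> (y <= t y)%N -> generates_permutational t.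
Proof.
move=> txx txy yty; pose s : transf n := [ffun w => if w == t x then x else y].
have sB : s \in Bn n.
  apply/BnP; exists y; apply: Bnk_intro => i; rewrite ffunE.
    by case: eqP => [->|].
  by case: eqP => [->|//]; lia.
apply: (generates_permutational_retract (s := s) (x := x) (y := y)) => //.
- by apply: contraTneq txx => ->; rewrite -leqNgt.
- by rewrite ffunE eqxx.
- by rewrite ffunE; case: eqP => // /(congr1 val) /=; lia.
Qed.

Lemma generates_permutational_two_descents t x y :
  (t x < x)%N -> (t y < y)%N -> t x != t y -> generates_permutational t.
Proof.
move=> txx tyy txy; pose k := if (x <= y)%N then y else x.
have txk : (t x < k)%N by rewrite /k; case: ifP; lia.
have tyk : (t y < k)%N by rewrite /k; case: ifP; lia.
pose s : transf n := [ffun w => if w == t x then x else if w == t y then y else k].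
have sB : s \in Bn n.
  apply/BnP; exists k; apply: Bnk_intro => i hi; rewrite ffunE.
    by case: eqP => [->|_]; last case: eqP => [->|].
  rewrite !ifN //; apply: contraTneq hi => ->; rewrite -ltnNge //.
apply: (generates_permutational_retract (s := s) (x := x) (y := y)) => //.
- by apply: contraNneq txy => ->.
- by rewrite ffunE eqxx.
- by rewrite ffunE eq_sym (negbTE txy) eqxx.
Qed.

Section NonPermutational.
Variable t : transf n.
Hypothesis t_np : ~ permutational t.

Lemma np_fixpoint_uniq x y : t x = x -> t y = y -> x = y.
Proof.
move=> tx ty; apply/eqP; apply: contra_notT t_np => xy.
exact: two_fixpoints_permutational xy tx ty.
Qed.

Lemma np_iter_fixpoint y : exists m, t (iter m t y) = iter m t y.
Proof.
have cycle_fix a b : (a < b)%N -> iter a t y = iter b t y ->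
    t (iter a t y) = iter a t y.
  move=> ab yab; apply/eqP; apply: contra_notT t_np.
  apply: (cycle_permutational (p := b - a)); first by rewrite subn_gt0.
  by rewrite -iterD subnK ?(ltnW ab).
pose f (k : 'I_n.+1) := iter k t y.
have /injectivePn [a [b ab fab]] : ~~ injectiveb f.
  by apply/negP => /injectiveP /leq_card; rewrite !card_ord ltnn.
case: (ltngtP a b) => [lt|lt|/val_inj eq_ab].
- by exists a; exact: cycle_fix fab.
- by exists b; exact: cycle_fix (esym fab).
- by rewrite eq_ab eqxx in ab.
Qed.

Variable r : 'I_n.
Hypothesis tr : t r = r.

Lemma np_moved x : x != r -> t x != x.
Proof. by apply: contraNneq => /np_fixpoint_uniq/(_ tr)/eqP. Qed.

Lemma np_descent_across (c : 'I_n) : (r < c)%N ->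
  exists2 z : 'I_n, (c <= z)%N & (t z < c)%N.
Proof.
move=> rc; have [m tm] := np_iter_fixpoint c.
by apply: (iter_cross (m := m) (leqnn c)); rewrite (np_fixpoint_uniq tm tr).
Qed.

Lemma np_notin_Bnk_generates_permutational :
  t \notin Bnk r -> generates_permutational t.
Proof.
case: (boolP [exists x, (t x < x) && (t x < r)]).
  move=> /existsP [x /andP [txx txr]] _.
  by apply: (generates_permutational_descent_ascent txx txr); rewrite tr.
move=> /existsPn no_low_descent.
have descent_high x : (t x < x)%N -> (r <= t x)%N.
  by move=> txx; have := no_low_descent x; rewrite txx /= -leqNgt.
rewrite inE => /forallPn [i]; case: ltnP => [ir|ri].
  rewrite -leqNgt => tii; exfalso.
  have ti_i : t i != i by apply: np_moved; apply: contraTneq ir => ->; rewrite ltnn.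
  have := descent_high i; rewrite ltn_neqAle ti_i tii; lia.
move=> tir.
have ir : i != r by apply: contraNneq tir => ->; rewrite tr.
have r_lt_i : (r < i)%N by rewrite ltn_neqAle eq_sym ir ri.
case: (ltngtP (t i) i) => [tii|iti|/val_inj tii];
  last by have := np_moved ir; rewrite tii eqxx.
- have r_lt_ti : (r < t i)%N by rewrite ltn_neqAle eq_sym tir descent_high.
  have [z tiz tzti] := np_descent_across r_lt_ti.
  apply: (generates_permutational_two_descents (x := i) (y := z)) => //; first lia.
  by apply: contraTneq tzti => ->; rewrite ltnn.
- have [z iz tzi] := np_descent_across r_lt_i.
  apply: (generates_permutational_descent_ascent (x := z) (y := i)) => //.
    lia.
  exact: ltnW.
Qed.
End NonPermutational.
End Permutational.

Lemma card_Bn_floor (R : realType) n : (1 < n)%N ->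
  (#|Bn n|%:Z = Num.floor (expR (1 : R) * (n.-1)`!%:R))%R.
Proof. by case: n => [//|m] /= m_gt0; rewrite card_Bn floor_expR1_fact. Qed.

Lemma notin_Bn_generates_permutational n (t : transf n) : (0 < n)%N ->
  ~ permutational t -> t \notin Bn n -> generates_permutational t.
Proof.
move=> n_gt0 t_np tNB; have [m tm] := np_iter_fixpoint t_np (Ordinal n_gt0).
apply: (np_notin_Bnk_generates_permutational t_np tm).
by apply: contra tNB => tr; apply/BnP; eexists; exact: tr.
Qed.

Theorem theorem4 (R : realType) (n : nat) (hn : (1 < n)%N) :
  [/\ (forall s t : transf n, s \in Bn n -> t \in Bn n -> tmul s t \in Bn n),
      (forall t : transf n, t \in Bn n -> ~ permutational t),
      (#|Bn n|%:Z = Num.floor (expR (1 : R) * ((n.-1)`!)%:R))%R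
    & (forall t : transf n, ~ permutational t -> t \notin Bn n ->
         exists u, sgen (t |: Bn n) u /\ permutational u)].
Proof.
split.
- exact: tmul_Bn.
- exact: Bn_not_permutational.
- exact: card_Bn_floor.
- by move=> t; exact: notin_Bn_generates_permutational (ltnW hn).
Qed.
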